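(* Let $P$ be a finite $2$-group such that $P/Z(P)$ is elementary abelian. Then $(xy)^4=x^4y^4$ for all $x,y\in P$, and in particular $\Omega_2(P)$ has exponent at most $4$. Furthermore, if $B$ is a group of automorphisms of $P$ of odd order with $[\Omega_2(P),B]=1$, then $B=1$.
   Context: $\Omega_2(P)$ denotes the subgroup of $P$ generated by the elements of order at most $4$. $[\Omega_2(P),B]=1$ means every element of $B$ fixes every element of $\Omega_2(P)$. *)

From mathcomp Require Import all_boot all_fingroup all_solvable.
Set Implicit Arguments.
Unset Strict Implicit.
Unset Printing Implicit Defensive.

From mathcomp Require Import all_boot all_fingroup all_solvable.
Set Implicit Arguments.
Unset Strict Implicit.
Unset Printing Implicit Defensive.
Local Open Scope group_scope.

(* 1. Squares of elements of P and commutators lie in Z(P), so the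
      Hall-Petrescu identity (xy)^4 = x^4 y^4 [y,x]^(C(4,2)) collapses to
      (xy)^4 = x^4 y^4, as [y,x]^6 = [y^2,x]^3 = 1.
   2. Hence the elements of P with x^4 = 1 form a subgroup, which is
      therefore Omega_2(P); in particular Omega_2(P) has exponent 4.
   3. Let b be an automorphism of P of odd order centralising Omega_2(P).
      A general coprimality fact: if u = b(x) x^-1 is fixed by b and has
      order coprime to #[b], then b(x) = x (since b^k(x) = u^k x).
      By induction on n, b fixes every x with x^(4^n) = 1: if b fixes x^4
      then u^4 = b(x^4) x^-4 = 1 by step 1, so u lies in Omega_2(P).
      Every element of P is killed by some 4^n, so b = 1 on P. *)

(* An automorphism b of G fixes x as soon as it fixes the "displacement"
   u = b(x) x^-1 and u has order coprime to that of b: indeed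
   b^k(x) = u^k x, and k = #[b] gives u^#[b] = 1. *)
Lemma aut_fix_of_fixed_displacement (gT : finGroupType) (G : {group gT})
    (b : {perm gT}) (x : gT) :
  b \in Aut G -> x \in G ->
  b (b x * x^-1) = b x * x^-1 -> coprime #[b x * x^-1] #[b] -> b x = x.
Proof.
move=> AutGb Gx fix_u co_ub; set u := b x * x^-1 in fix_u co_ub.
have Gu : u \in G by rewrite groupM ?groupV ?(Aut_closed AutGb).
have iter_b k : (b ^+ k) x = u ^+ k * x.
  elim: k => [|k IHk]; first by rewrite expg0 perm1 mul1g.
  rewrite expgSr permM IHk -(autmE AutGb) morphM ?groupX // morphX //=.
  by rewrite autmE fix_u expgSr -mulgA mulgKV.
have u_ob : u ^+ #[b] = 1.
  by apply: (mulIg x); rewrite -iter_b expg_order perm1 mul1g.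
have /eqP u1 : u == 1.
  have : #[u] %| gcdn #[u] #[b] by rewrite dvdn_gcd dvdnn order_dvdn u_ob eqxx.
  by rewrite (eqnP co_ub) dvdn1 order_eq1.
by rewrite -(mulgKV x (b x)) -/u u1 mul1g.
Qed.

Lemma group_Ldiv_of_expM (gT : finGroupType) (G : {group gT}) (n : nat) :
  {in G &, forall x y, (x * y) ^+ n = x ^+ n * y ^+ n} ->
  group_set 'Ldiv_n(G).
Proof.
move=> expM; apply/group_setP; split=> [|x y].
  by rewrite !inE group1 expg1n eqxx.
rewrite !inE => /andP[Gx /eqP xn1] /andP[Gy /eqP yn1].
by rewrite groupM // expM // xn1 yn1 mulg1 eqxx.
Qed.

Section CentralQuotientElementaryAbelian.

Variables (gT : finGroupType) (P : {group gT}).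
Hypothesis abelem_PZ : 2.-abelem (P / 'Z(P)).

Let nZP : P \subset 'N('Z(P)) := normal_norm (center_normal P).

(* Squares are central, as P / Z(P) has exponent 2. *)
Lemma sqr_in_center x : x \in P -> x ^+ 2 \in 'Z(P).
Proof.
have [_ exp2] := abelemP (isT : prime 2) abelem_PZ.
move=> Px; apply: coset_idr; first by rewrite groupX ?(subsetP nZP).
by rewrite morphX ?(subsetP nZP) // exp2 // mem_quotient.
Qed.

(* Commutators are central, as P / Z(P) is abelian. *)
Lemma commg_in_center x y : x \in P -> y \in P -> [~ x, y] \in 'Z(P).
Proof.
have [abPZ _] := abelemP (isT : prime 2) abelem_PZ.
by move=> Px Py; apply: (subsetP (der1_min nZP abPZ)); apply: mem_commg.
Qed.

Lemma expM4 x y : x \in P -> y \in P -> (x * y) ^+ 4 = x ^+ 4 * y ^+ 4.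
Proof.
move=> Px Py.
have central z w : z \in 'Z(P) -> w \in P -> commute w z.
  by move=> /centerP[_ cPz] Pw; apply: commute_sym; apply: cPz.
have Zyx := commg_in_center Py Px.
rewrite (expMg_Rmul 4 (central _ _ Zyx Py) (central _ _ Zyx Px)).
rewrite [binomial 4 2]/= (expgM _ 2 3) -commXg; last exact: central.
have /commgP/eqP -> : commute (y ^+ 2) x.
  by apply: commute_sym; apply: central; [apply: sqr_in_center |].
by rewrite expg1n mulg1.
Qed.

Hypothesis pP : 2.-group P.

Lemma Ohm2_Ldiv4 : 'Ohm_2(P) = 'Ldiv_4(P).
Proof.
by rewrite (OhmE 2 pP) (gen_set_id (@group_Ldiv_of_expM _ P 4 expM4)).
Qed.

Lemma exponent_Ohm2 : exponent 'Ohm_2(P) %| 4.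
Proof. by rewrite -sub_LdivT Ohm2_Ldiv4 subsetIr. Qed.

(* Part 3: an automorphism of odd order centralising Omega_2(P) is
   trivial on P; b fixes every x with x^(4^n) = 1, by induction on n. *)
Lemma odd_aut_cent_Ohm2_fix (b : {perm gT}) :
    b \in Aut P -> odd #[b] -> {in 'Ohm_2(P), forall x, b x = x} ->
  {in P, forall x, b x = x}.
Proof.
move=> AutPb odd_b cOb.
have bX k y : y \in P -> b (y ^+ k) = b y ^+ k.
  by move=> Py; rewrite -(autmE AutPb) morphX.
suff fix_pow n x : x \in P -> x ^+ (4 ^ n) = 1 -> b x = x.
  move=> x Px; have [k ox] := p_natP (mem_p_elt pP Px).
  apply: (fix_pow k) => //; apply/eqP; rewrite -order_dvdn ox.
  by rewrite (_ : 4 = 2 * 2)%N // expnMn dvdn_mull.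
elim: n x => [|n IHn] x Px.
  by rewrite expn0 expg1 => ->; rewrite -(autmE AutPb) morph1.
rewrite expnS expgM => x4n1.
have fix_x4 : b (x ^+ 4) = x ^+ 4 by apply: IHn; rewrite ?groupX.
have Pbx : b x \in P := Aut_closed AutPb Px.
have Ou : b x * x^-1 \in 'Ohm_2(P).
  rewrite Ohm2_Ldiv4 !inE groupM ?groupV //=.
  by rewrite expM4 ?groupV // -bX // fix_x4 expgVn mulgV.
apply: aut_fix_of_fixed_displacement AutPb Px (cOb _ Ou) _.
apply: coprime_dvdl (dvdn_trans (dvdn_exponent Ou) exponent_Ohm2) _.
by rewrite (coprimeXl 2 (_ : coprime 2 _)) // coprime2n.
Qed.

End CentralQuotientElementaryAbelian.

Theorem lemma2p2 (gT : finGroupType) (P : {group gT})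
    (hP : 2.-group P) (hel : 2.-abelem (P / 'Z(P))) :
  [/\ (forall x y, x \in P -> y \in P -> (x * y) ^+ 4 = x ^+ 4 * y ^+ 4),
      exponent 'Ohm_2(P) %| 4
    & forall B : {group {perm gT}},
        B \subset Aut P -> odd #|B| ->
        (forall b x, b \in B -> x \in 'Ohm_2(P) -> b x = x) ->
        B :=: 1].
Proof.
split; [exact: expM4 | exact: exponent_Ohm2 |].
move=> B sBA oddB cB; apply/trivgP/subsetP => b Bb.
have AutPb := subsetP sBA b Bb.
have fixP := odd_aut_cent_Ohm2_fix hel hP AutPb (dvdn_odd (order_dvdG Bb) oddB)
  (fun x => cB b x Bb).
rewrite inE; apply/eqP/permP => x; rewrite perm1.
have [Px | nPx] := boolP (x \in P); first exact: fixP.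
exact: out_Aut nPx.
Qed.
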